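(* If a join-congruence uniform lattice is shellable, then it is join-extremal. If a meet-congruence uniform lattice is shellable, then it is meet-extremal.
   Context: All lattices are finite. For a convex subset $C$ of a lattice $L$, let $I_L(C)=\{y\in L\mid\exists x\in C,\ y\le x\}$, and the doubling $L[C]$ is the subposet of $L\times\{0<1\}$ on $\big(I_L(C)\times\{0\}\big)\sqcup\big(((L\setminus I_L(C))\cup C)\times\{1\}\big)$. A lattice is join-congruence uniform (resp. meet-congruence uniform) if it is obtained from the one-element lattice by successive doublings of nonempty lower (resp. upper) pseudo-intervals, where a lower (resp. upper) pseudo-interval is a convex union of intervals sharing the same minimum (resp. maximum). Join-extremal (resp. meet-extremal) means the length (maximum number of elements of a chain minus one) equals the number of join-irreducible (resp. meet-irreducible) elements. The order complex of $L$ has the chains of $L$ as faces; $L$ is shellable if its facets (maximal chains) admit a linear order $F_1,\dots,F_k$ such that for each $j<k$, $\big(\bigcup_{i\le j}\langle F_i\rangle\big)\cap\langle F_{j+1}\rangle$ is pure of dimension $|F_{j+1}|-2$, with $\langle F\rangle$ the set of subsets of $F$. *)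

From HB Require Import structures.
From mathcomp Require Import all_boot all_order.
Set Implicit Arguments. Unset Strict Implicit. Unset Printing Implicit Defensive.
Import Order.Theory.
Local Open Scope order_scope.

Section RelDefs.
Variables (T : finType) (le : rel T).

Definition interval (a b : T) : {set T} := [set y | le a y && le y b].

Definition convex (C : {set T}) : bool :=
  [forall x in C, forall z in C, forall y, (le x y && le y z) ==> (y \in C)].

Definition lower_pseudo_interval (C : {set T}) : Prop :=
  exists (a : T) (B : {set T}),
    [/\ B != set0, (forall b, b \in B -> le a b),
        C = \bigcup_(b in B) interval a b & convex C].

Definition upper_pseudo_interval (C : {set T}) : Prop :=
  exists (b : T) (A : {set T}),
    [/\ A != set0, (forall a, a \in A -> le a b),
        C = \bigcup_(a in A) interval a b & convex C].

Definition down_closure (C : {set T}) : {set T} :=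
  [set y | [exists x in C, le y x]].

(* underlying set of the doubling L[C], as a subset of L x {0<1}
   (false = 0, true = 1) *)
Definition doubling (C : {set T}) : {set T * bool} :=
  [set p | if p.2 then (p.1 \notin down_closure C) || (p.1 \in C)
           else p.1 \in down_closure C].

Definition dbl_le (p q : T * bool) : bool := le p.1 q.1 && (p.2 <= q.2)%N.

End RelDefs.

(* Lattices obtained from the one-element lattice by successive doublings of
   nonempty lower pseudo-intervals (lower = true) or upper pseudo-intervals
   (lower = false); everything up to order isomorphism. *)
Inductive doubling_generated (lower : bool) : forall T : finType, rel T -> Prop :=
| dg_one (T : finType) (le : rel T) :
    #|T| = 1 -> reflexive le -> doubling_generated lower le
| dg_double (T : finType) (le : rel T) (C : {set T})
    (T' : finType) (le' : rel T') (f : T' -> T * bool) :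
    doubling_generated lower le ->
    C != set0 ->
    (if lower then lower_pseudo_interval le C else upper_pseudo_interval le C) ->
    injective f ->
    (forall x, f x \in doubling le C) ->
    (forall p, p \in doubling le C -> exists x, f x = p) ->
    (forall x y, le' x y = dbl_le le (f x) (f y)) ->
    doubling_generated lower le'.

Section LatticeDefs.
Variables (d : Order.disp_t) (L : finTBLatticeType d).

Definition join_congruence_uniform : Prop :=
  doubling_generated true (fun x y : L => x <= y).
Definition meet_congruence_uniform : Prop :=
  doubling_generated false (fun x y : L => x <= y).

Definition join_irreducible (x : L) : bool :=
  (x != \bot) && [forall y : L, forall z : L, (x == y `|` z) ==> (x == y) || (x == z)].
Definition meet_irreducible (x : L) : bool :=
  (x != \top) && [forall y : L, forall z : L, (x == y `&` z) ==> (x == y) || (x == z)].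

(* chains of L = faces of the order complex *)
Definition chain (S : {set L}) : bool :=
  [forall x in S, forall y in S, (x <= y) || (y <= x)].

Definition lattice_length : nat := ((\max_(S : {set L} | chain S) #|S|) - 1)%N.

Definition join_extremal : Prop := lattice_length = #|[set x : L | join_irreducible x]|.
Definition meet_extremal : Prop := lattice_length = #|[set x : L | meet_irreducible x]|.

(* facets of the order complex = maximal chains *)
Definition maximal_chain (F : {set L}) : bool :=
  chain F && [forall G : {set L}, (chain G && (F \subset G)) ==> (G == F)].

(* a simplicial complex K (set of faces) is pure of dimension n - 1, i.e.
   all its facets (inclusion-maximal faces) have n elements *)
Definition pure_of_size (K : {set {set L}}) (n : nat) : Prop :=
  forall G, G \in K -> (forall H, H \in K -> G \subset H -> H = G) -> #|G| = n.

(* (U_{i<=j} <F_i>) cap <F_{j+1}>, with the facets listed 0-indexed in s *)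
Definition shelling_complex (s : seq {set L}) (j : nat) : {set {set L}} :=
  [set G : {set L} | (G \subset nth set0 s j) && has (fun F : {set L} => G \subset F) (take j s)].

Definition shellable : Prop :=
  exists s : seq {set L},
    [/\ uniq s, (forall F, (F \in s) = maximal_chain F) &
        forall j, (0 < j < size s)%N ->
          pure_of_size (shelling_complex s j) (#|nth set0 s j| - 1)].

End LatticeDefs.

(* Each doubling L |-> L[C] of a lower pseudo-interval C with minimum a adds
   exactly one element with a unique lower cover, the upper copy of a; in a
   lattice these elements are the join-irreducibles, so their number is the
   number of doublings.  The length grows by at most one at each doubling, and
   shellability forces it to grow.  Of shellability only this is used: every
   maximal chain after the first differs from an earlier one in at most one
   element, a property that passes from L[C] to L by projection.  A maximum
   chain of L either meets C, and then lifts to a longer chain containing both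
   copies of an element of C, or lifts to a maximal chain of L[C] of the same
   size containing no such pair.  In the shelling order, a maximal chain that
   contains a pair forces an earlier one to contain a pair, so the first chain
   does; then induction along the order shows that chains without a pair are
   shorter than the length of L, ruling out the second alternative.
   Meet-congruence uniform lattices are handled by duality. *)

From HB Require Import structures.
From mathcomp Require Import all_boot all_order.
From mathcomp Require Import zify.
Set Implicit Arguments. Unset Strict Implicit. Unset Printing Implicit Defensive.

Section RelChains.
Variables (T : finType) (le : rel T).

Definition rchain (S : {set T}) : bool :=
  [forall x in S, forall y in S, le x y || le y x].

Definition rmax_chain (F : {set T}) : bool :=
  rchain F && [forall G : {set T}, (rchain G && (F \subset G)) ==> (G == F)].

Definition max_chain_card : nat := \max_(S : {set T} | rchain S) #|S|.

Definition weakly_shellable : Prop :=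
  exists s : seq {set T},
    (forall F, (F \in s) = rmax_chain F) /\
    forall j, (0 < j < size s)%N -> exists2 i, (i < j)%N &
      (#|nth set0 s j| <= #|nth set0 s i :&: nth set0 s j| + 1)%N.

Definition rlt (x y : T) : bool := (x != y) && le x y.

Definition lower_covers (x : T) : {set T} :=
  [set y | rlt y x && [forall z, ~~ (rlt y z && rlt z x)]].

Definition unicovered : {set T} := [set x | #|lower_covers x| == 1%N].

Lemma rchainP (S : {set T}) :
  reflect (forall x y, x \in S -> y \in S -> le x y || le y x) (rchain S).
Proof.
apply: (iffP forallP) => [H x y xS yS | H x].
  by move: (H x); rewrite xS /= => /forallP/(_ y); rewrite yS.
by apply/implyP => xS; apply/forallP => y; apply/implyP => yS; apply: H.
Qed.

Lemma rmax_chainP (F : {set T}) :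
  reflect (rchain F /\ forall G, rchain G -> F \subset G -> G = F) (rmax_chain F).
Proof.
apply: (iffP andP) => [[cF /forallP maxF] | [cF maxF]]; split => //.
  by move=> G cG sFG; move: (maxF G); rewrite cG sFG => /eqP.
by apply/forallP => G; apply/implyP => /andP [cG /(maxF G cG) ->].
Qed.

Lemma rmax_chain_chain (F : {set T}) : rmax_chain F -> rchain F.
Proof. by case/andP. Qed.

Lemma rmax_chain_eq (F G : {set T}) : rmax_chain F -> rchain G -> F \subset G -> G = F.
Proof. by case/rmax_chainP => _; apply. Qed.

Lemma rchainS (S S' : {set T}) : S' \subset S -> rchain S -> rchain S'.
Proof.
by move=> sub /rchainP cS; apply/rchainP => x y xS yS; apply: cS; apply: (subsetP sub).
Qed.

Lemma rchain_extend (S : {set T}) : rchain S -> exists2 F, rmax_chain F & S \subset F.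
Proof.
move=> cS.
have [F /andP [cF sSF] Fmax] := @arg_maxnP _ S (fun G => rchain G && (S \subset G))
  (fun G => #|G|) (introT andP (conj cS (subxx _))).
exists F => //; apply/rmax_chainP; split => // G cG sFG.
have /Fmax leGF : rchain G && (S \subset G) by rewrite cG (subset_trans sSF sFG).
by apply/eqP; rewrite eq_sym eqEcard sFG.
Qed.

Lemma leq_max_chain_card (S : {set T}) : rchain S -> (#|S| <= max_chain_card)%N.
Proof. by move=> cS; apply: (@leq_bigmax_cond _ rchain (fun S => #|S|)). Qed.

Lemma max_chain_card_attained : exists2 S, rchain S & #|S| = max_chain_card.
Proof.
have : (0 < #|[pred S : {set T} | rchain S]|)%N.
  by apply/card_gt0P; exists set0; rewrite inE; apply/rchainP => x y; rewrite inE.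
move/(@eq_bigmax_cond _ _ (fun S : {set T} => #|S|)) => [S cS E].
by exists S => //; rewrite /max_chain_card -E; apply: eq_bigl => S'; rewrite inE.
Qed.

Lemma max_card_rmax_chain (S : {set T}) :
  rchain S -> #|S| = max_chain_card -> rmax_chain S.
Proof.
move=> cS cardS; have [F mF sSF] := rchain_extend cS.
suff -> : S = F by [].
apply/eqP; rewrite eqEcard sSF cardS.
exact/leq_max_chain_card/rmax_chain_chain.
Qed.

End RelChains.

Lemma rchain_op (T : finType) (le : rel T) (S : {set T}) :
  rchain (fun x y => le y x) S = rchain le S.
Proof. by apply/rchainP/rchainP => cS x y xS yS; rewrite orbC; apply: cS. Qed.

Lemma rmax_chain_op (T : finType) (le : rel T) (F : {set T}) :
  rmax_chain (fun x y => le y x) F = rmax_chain le F.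
Proof.
by rewrite /rmax_chain rchain_op; congr (_ && _); apply: eq_forallb => G; rewrite rchain_op.
Qed.

Lemma max_chain_card_op (T : finType) (le : rel T) :
  max_chain_card (fun x y => le y x) = max_chain_card le.
Proof. by apply: eq_bigl => S; rewrite rchain_op. Qed.

Lemma weakly_shellable_op (T : finType) (le : rel T) :
  weakly_shellable le -> weakly_shellable (fun x y => le y x).
Proof. by move=> [s [s_max s_step]]; exists s; split => // F; rewrite rmax_chain_op. Qed.

Section PartialOrder.
Variables (T : finType) (le : rel T).
Hypotheses (le_refl : reflexive le) (le_anti : antisymmetric le) (le_trans : transitive le).

Lemma rchain_min (A : {set T}) : A != set0 -> rchain le A ->
  exists2 m, m \in A & forall z, z \in A -> le m z.
Proof.
case/set0Pn => a aA /rchainP cA.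
have [m mA mmin] := @arg_minnP _ a (fun m => m \in A)
  (fun m => #|[set w in A | le w m]|) aA.
exists m => // z zA; case/orP: (cA _ _ mA zA) => // lezm.
have sub : [set w in A | le w z] \subset [set w in A | le w m].
  by apply/subsetP => w; rewrite !inE => /andP [-> lwz]; apply: le_trans lwz lezm.
have eqs : [set w in A | le w z] = [set w in A | le w m].
  by apply/eqP; rewrite eqEcard sub; apply: mmin.
have : m \in [set w in A | le w z] by rewrite eqs inE mA le_refl.
by rewrite inE => /andP [].
Qed.

Lemma exists_lower_cover z x : rlt le z x -> exists2 y, le z y & y \in lower_covers le x.
Proof.
move=> lzx.
have [y /andP [lzy lyx] ymax] := @arg_maxnP _ z (fun y => le z y && rlt le y x)
  (fun y => #|[set w | le w y]|) (introT andP (conj (le_refl z) lzx)).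
exists y => //; rewrite inE lyx /=; apply/forallP => w; apply/negP => /andP [lyw lwx].
have [nyw {}lyw] := andP lyw.
have /ymax lecard : le z w && rlt le w x by rewrite (le_trans lzy lyw) lwx.
have sub : [set u | le u y] \subset [set u | le u w].
  by apply/subsetP => u; rewrite !inE => luy; apply: le_trans luy lyw.
have eqs : [set u | le u y] = [set u | le u w] by apply/eqP; rewrite eqEcard sub.
have : w \in [set u | le u y] by rewrite eqs inE le_refl.
by rewrite inE => lwy; case/eqP: nyw; apply: le_anti; rewrite lyw lwy.
Qed.

Lemma rchainU1 (M : {set T}) x :
  rchain le M -> (forall z, z \in M -> le x z || le z x) -> rchain le (x |: M).
Proof.
move=> /rchainP cM cx; apply/rchainP => u v.
rewrite !inE => /orP [/eqP -> | uM] /orP [/eqP -> | vM].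
- by rewrite le_refl.
- exact: cx.
- by rewrite orbC; apply: cx.
- exact: cM.
Qed.

Lemma rmax_chain_mem (M : {set T}) x :
  rmax_chain le M -> (forall z, z \in M -> le x z || le z x) -> x \in M.
Proof.
move=> mM cx; have cM := rmax_chain_chain mM.
by rewrite -(rmax_chain_eq mM (rchainU1 cM cx) (subsetUr _ _)) setU11.
Qed.

End PartialOrder.

Lemma rchain_max (T : finType) (le : rel T) : reflexive le -> transitive le ->
  forall A : {set T}, A != set0 -> rchain le A ->
  exists2 m, m \in A & forall z, z \in A -> le z m.
Proof.
move=> le_refl le_trans A An cA.
apply: (@rchain_min _ (fun x y => le y x)) => //; last by rewrite rchain_op.
by move=> y x z lyx lzy; apply: le_trans lzy lyx.
Qed.

Lemma leq_cardsI_add2 (T : finType) (A B : {set T}) x0 x1 :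
  x0 \in A -> x1 \in A -> x0 != x1 -> x0 \notin B -> x1 \notin B ->
  (#|A :&: B| + 2 <= #|A|)%N.
Proof.
move=> x0A x1A nx x0B x1B; rewrite -(cardsID B A) leq_add2l.
have <- : #|[set x0; x1]| = 2 by rewrite cards2 nx.
apply: subset_leq_card; apply/subsetP => z; rewrite !inE.
by case/orP => /eqP ->; rewrite ?x0A ?x1A ?x0B ?x1B.
Qed.

Lemma leq_bool (a b : bool) : (a <= b)%N = a ==> b.
Proof. by case: a; case: b. Qed.

Section Doubling.
Variables (T : finType) (le : rel T) (C : {set T}) (T' : finType) (le' : rel T')
  (f : T' -> T * bool).
Hypotheses (le_refl : reflexive le) (le_anti : antisymmetric le) (le_trans : transitive le).
Hypotheses (C_neq0 : C != set0) (C_convex : convex le C) (f_inj : injective f)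
  (f_mem : forall x, f x \in doubling le C)
  (f_onto : forall q, q \in doubling le C -> exists x, f x = q)
  (le'E : forall x y, le' x y = dbl_le le (f x) (f y)).

Local Notation I := (down_closure le C).

Definition base (x : T') : T := (f x).1.
Definition level (x : T') : bool := (f x).2.

Lemma base_level_mem x :
  if level x then (base x \notin I) || (base x \in C) else base x \in I.
Proof. by have := f_mem x; rewrite inE. Qed.

Lemma le'_base x y : le' x y = le (base x) (base y) && (level x <= level y)%N.
Proof. by rewrite le'E. Qed.

Lemma base_level_inj x y : base x = base y -> level x = level y -> x = y.
Proof.
move=> eb el; apply: f_inj.
by rewrite [f x]surjective_pairing [f y]surjective_pairing -/(base x) -/(level x) eb el.
Qed.

Lemma down_closure_le y x : le y x -> x \in I -> y \in I.
Proof.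
move=> lyx; rewrite !inE => /existsP [c /andP [cC lxc]].
by apply/existsP; exists c; rewrite cC (le_trans lyx lxc).
Qed.

Lemma mem_down_closure c : c \in C -> c \in I.
Proof. by move=> cC; rewrite inE; apply/existsP; exists c; rewrite cC le_refl. Qed.

Lemma convexP x y z : x \in C -> z \in C -> le x y -> le y z -> y \in C.
Proof.
move=> xC zC lxy lyz; move/forallP: C_convex => /(_ x); rewrite xC => /forallP /(_ z).
by rewrite zC => /forallP /(_ y); rewrite lxy lyz.
Qed.

Lemma convex_down_closure x y : x \in C -> le x y -> y \in I -> y \in C.
Proof.
move=> xC lxy; rewrite inE => /existsP [c /andP [cC lyc]].
exact: convexP xC cC lxy lyc.
Qed.

Lemma level0_down x : level x = false -> base x \in I.
Proof. by move=> l0; have := base_level_mem x; rewrite l0. Qed.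

Lemma level1_C x : level x = true -> base x \in I -> base x \in C.
Proof. by move=> l1 xI; have := base_level_mem x; rewrite l1 xI. Qed.

Lemma doubling_preimage t (k : bool) :
  (if k then (t \notin I) || (t \in C) else t \in I) ->
  exists x, base x = t /\ level x = k.
Proof.
move=> tk; have [x fx] : exists x, f x = (t, k) by apply: f_onto; rewrite inE.
by exists x; rewrite /base /level fx.
Qed.

Lemma lower_copy c : c \in C -> exists x, base x = c /\ level x = false.
Proof. by move=> cC; apply: doubling_preimage; apply: mem_down_closure. Qed.

Lemma upper_copy c : c \in C -> exists x, base x = c /\ level x = true.
Proof. by move=> cC; apply: doubling_preimage; rewrite cC orbT. Qed.

(* [lift t] is the least copy of [t] in the doubling. *)
Lemma lift_subproof t : exists x, f x == (t, t \notin I).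
Proof.
have [x [eb el]] : exists x, base x = t /\ level x = (t \notin I).
  by apply: doubling_preimage; case: (t \in I).
by exists x; rewrite [f x]surjective_pairing -/(base x) -/(level x) eb el.
Qed.

Definition lift (t : T) : T' := xchoose (lift_subproof t).

Lemma lift_f t : f (lift t) = (t, t \notin I).
Proof. exact/eqP/(xchooseP (lift_subproof t)). Qed.

Lemma base_lift t : base (lift t) = t. Proof. by rewrite /base lift_f. Qed.
Lemma level_lift t : level (lift t) = (t \notin I). Proof. by rewrite /level lift_f. Qed.

Lemma lift_inj : injective lift.
Proof. by move=> t u E; rewrite -(base_lift t) E base_lift. Qed.

Lemma lift_le t u : le t u -> le' (lift t) (lift u).
Proof.
move=> ltu; rewrite le'_base !base_lift !level_lift ltu /=.
case: (boolP (u \in I)) => [/(down_closure_le ltu) -> | _] //.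
by rewrite leq_b1.
Qed.

Lemma le'_refl : reflexive le'.
Proof. by move=> x; rewrite le'_base le_refl leqnn. Qed.

Lemma le'_anti : antisymmetric le'.
Proof.
move=> x y; rewrite !le'_base => /andP [/andP [l1 b1] /andP [l2 b2]].
apply: base_level_inj; first by apply: le_anti; rewrite l1 l2.
by move: b1 b2; case: (level x); case: (level y).
Qed.

Lemma le'_trans : transitive le'.
Proof.
move=> y x z; rewrite !le'_base => /andP [l1 b1] /andP [l2 b2].
by rewrite (le_trans l1 l2) (leq_trans b1 b2).
Qed.

Lemma rchain_base (M : {set T'}) : rchain le' M -> rchain le (base @: M).
Proof.
move/rchainP => cM; apply/rchainP => u v /imsetP [x xM ->] /imsetP [y yM ->].
by case/orP: (cM x y xM yM); rewrite !le'_base => /andP [-> _]; rewrite ?orbT.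
Qed.

Lemma rchain_lift (D : {set T}) : rchain le D -> rchain le' (lift @: D).
Proof.
move/rchainP => cD; apply/rchainP => x y /imsetP [t tD ->] /imsetP [u uD ->].
by case/orP: (cD t u tD uD) => /lift_le ->; rewrite ?orbT.
Qed.

Definition vertical (M : {set T'}) : bool :=
  [exists x0 in M, exists x1 in M, (base x0 == base x1) && ~~ level x0 && level x1].

Lemma verticalP (M : {set T'}) :
  reflect (exists x0 x1, [/\ x0 \in M, x1 \in M, base x0 = base x1,
                             level x0 = false & level x1 = true])
          (vertical M).
Proof.
apply: (iffP existsP) => [[x0 /andP [x0M /existsP [x1 /and3P [x1M /andP [/eqP eb l0] l1]]]]
                          | [x0 [x1 [x0M x1M eb l0 l1]]]].
  by exists x0, x1; split => //; apply/negbTE.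
by exists x0; rewrite x0M; apply/existsP; exists x1; rewrite x1M eb eqxx l0 l1.
Qed.

Lemma vertical_pair_C x0 x1 :
  base x0 = base x1 -> level x0 = false -> level x1 = true -> base x1 \in C.
Proof. by move=> eb l0 l1; apply: level1_C => //; rewrite -eb; apply: level0_down. Qed.

Lemma nonvertical_base_inj (M : {set T'}) : ~~ vertical M -> {in M &, injective base}.
Proof.
move=> nvM x y xM yM eb; apply: base_level_inj => //.
case lx: (level x); case ly: (level y) => //; case/verticalP: nvM.
  by exists y, x; split.
by exists x, y; split.
Qed.

Lemma vertical_pair_unique (M : {set T'}) x0 x1 y0 y1 : rchain le' M ->
  x0 \in M -> x1 \in M -> base x0 = base x1 -> level x0 = false -> level x1 = true ->
  y0 \in M -> y1 \in M -> base y0 = base y1 -> level y0 = false -> level y1 = true ->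
  y0 = x0.
Proof.
move=> /rchainP cM x0M x1M ebx lx0 lx1 y0M y1M eby ly0 ly1.
have below u v : u \in M -> v \in M -> level u = false -> level v = true ->
    le (base u) (base v).
  move=> uM vM lu lv; case/orP: (cM _ _ uM vM); rewrite le'_base; first by case/andP.
  by rewrite lu lv andbF.
apply: base_level_inj; last by rewrite lx0 ly0.
by apply: le_anti; rewrite {1}ebx (below y0 x1) //= eby (below x0 y1).
Qed.

Lemma card_rchain_base (M : {set T'}) : rchain le' M -> (#|M| <= #|base @: M| + 1)%N.
Proof.
move=> cM; case: (boolP (vertical M)) => [/verticalP [x0 [x1 [x0M x1M eb l0 l1]]] | nvM];
  last by rewrite card_in_imset ?leq_addr //; apply: nonvertical_base_inj.
have nv : ~~ vertical (M :\ x0).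
  apply/verticalP => [[y0 [y1 [y0M y1M eby ly0 ly1]]]].
  move: y0M y1M; rewrite !inE => /andP [ny0 y0M] /andP [_ y1M].
  by case/eqP: ny0; apply: (vertical_pair_unique cM x0M x1M eb l0 l1 y0M y1M).
rewrite (cardsD1 x0 M) x0M add1n addn1 ltnS -(card_in_imset (nonvertical_base_inj nv)).
by apply/subset_leq_card/imsetS/subsetDl.
Qed.

Lemma max_chain_card_doubling_le :
  (max_chain_card le' <= (max_chain_card le).+1)%N.
Proof.
apply/bigmax_leqP => M cM; apply: leq_trans (card_rchain_base cM) _.
by rewrite addn1 ltnS; apply/leq_max_chain_card/rchain_base.
Qed.

Lemma rmax_chain_vertical (M : {set T'}) x :
  rmax_chain le' M -> x \in M -> base x \in C -> vertical M.
Proof.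
move=> maxM xM xC; have /rchainP cM := rmax_chain_chain maxM.
case lx: (level x).
- set A := M :&: [set y | level y].
  have An : A != set0 by apply/set0Pn; exists x; rewrite !inE xM lx.
  have [m] := rchain_min le'_refl le'_trans An (rchainS (subsetIl _ _) (rmax_chain_chain maxM)).
  rewrite !inE => /andP [mM lm] mmin.
  have lmx : le (base m) (base x).
    by move: (mmin x); rewrite !inE xM lx le'_base => /(_ isT) /andP [].
  have mI : base m \in I := down_closure_le lmx (mem_down_closure xC).
  have [x0 [eb l0]] := doubling_preimage (k := false) mI.
  suff x0M : x0 \in M by apply/verticalP; exists x0, m.
  apply: (rmax_chain_mem le'_refl maxM) => z zM; rewrite !le'_base eb l0.
  case lz: (level z).
    by move: (mmin z); rewrite !inE zM lz le'_base => /(_ isT) /andP [-> _].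
  by case/orP: (cM _ _ mM zM); rewrite !le'_base lm lz ?andbF // => /andP [-> _]; rewrite orbT.
- set A := M :&: [set y | ~~ level y].
  have An : A != set0 by apply/set0Pn; exists x; rewrite !inE xM lx.
  have [m] := rchain_max le'_refl le'_trans An (rchainS (subsetIl _ _) (rmax_chain_chain maxM)).
  rewrite !inE => /andP [mM /negbTE lm] mmax.
  have lxm : le (base x) (base m).
    by move: (mmax x); rewrite !inE xM lx le'_base => /(_ isT) /andP [].
  have mC : base m \in C := convex_down_closure xC lxm (level0_down lm).
  have [x1 [eb l1]] := upper_copy mC.
  suff x1M : x1 \in M by apply/verticalP; exists m, x1.
  apply: (rmax_chain_mem le'_refl maxM) => z zM; rewrite !le'_base eb l1.
  case lz: (level z); last first.
    by move: (mmax z); rewrite !inE zM lz le'_base => /(_ isT) /andP [-> _]; rewrite orbT.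
  by case/orP: (cM _ _ mM zM); rewrite !le'_base lm lz ?andbF // => /andP [-> _].
Qed.

Lemma rmax_chain_base (M : {set T'}) : rmax_chain le' M -> rmax_chain le (base @: M).
Proof.
move=> maxM; have /rchainP cM := rmax_chain_chain maxM.
apply/rmax_chainP; split => [|G cG sub]; first exact/rchain_base/rmax_chain_chain.
apply/eqP; rewrite eqEsubset sub andbT; apply/subsetP => t tG; apply/negPn/negP => tM.
have cmp z : z \in M -> le (base z) t || le t (base z).
  by move=> zM; move/rchainP: cG; apply => //; apply/(subsetP sub)/imset_f.
have neq z : z \in M -> base z != t by move=> zM; apply: contra tM => /eqP <-; apply: imset_f.
(* The level at which a copy of [t] is comparable with every element of [M]. *)
pose k := if t \in I then (t \in C) && [exists z in M, level z && le (base z) t] else true.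
have below z : z \in M -> le (base z) t -> level z -> k.
  move=> zM lzt lz; rewrite /k; case: ifP => // tI.
  have zC : base z \in C by apply: level1_C lz (down_closure_le lzt tI).
  by rewrite (convex_down_closure zC lzt tI); apply/existsP; exists z; rewrite zM lz lzt.
have above z : z \in M -> le t (base z) -> k -> level z.
  move=> zM ltz; case lz: (level z) => //; have zI := level0_down lz.
  rewrite /k (down_closure_le ltz zI) => /andP [_ /existsP [z' /and3P [z'M lz' lz't]]].
  case/orP: (cM _ _ z'M zM); rewrite !le'_base lz lz' ?andbF // => /andP [lzz' _].
  by case/eqP: (neq z zM); apply: le_anti; rewrite ltz (le_trans lzz' lz't).
have [x [eb el]] : exists x, base x = t /\ level x = k.
  apply: doubling_preimage; rewrite /k; case: (boolP (t \in I)) => //= _.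
  by case: (t \in C) => //=; case: ifP.
case/negP: tM; rewrite -eb; apply/imset_f/(rmax_chain_mem le'_refl maxM) => z zM.
rewrite !le'_base eb el; case/orP: (cmp z zM) => h; rewrite h /=.
  by apply/orP; right; rewrite leq_bool; apply/implyP/below.
by apply/orP; left; rewrite leq_bool; apply/implyP/above.
Qed.

Lemma rmax_chain_lift (D : {set T}) : rmax_chain le D ->
  exists M, [/\ rmax_chain le' M, lift @: D \subset M & base @: M = D].
Proof.
move=> maxD; have [M maxM sub] := rchain_extend (rchain_lift (rmax_chain_chain maxD)).
exists M; split => //; apply: rmax_chain_eq maxD (rchain_base (rmax_chain_chain maxM)) _.
by apply/subsetP => t tD; rewrite -(base_lift t); apply/imset_f/(subsetP sub)/imset_f.
Qed.

Lemma weakly_shellable_base : weakly_shellable le' -> weakly_shellable le.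
Proof.
case=> s [s_max s_step]; exists (map (fun M : {set T'} => base @: M) s); split.
  move=> F; apply/mapP/idP => [[M Ms ->] | maxF]; first by apply: rmax_chain_base; rewrite -s_max.
  by have [M [maxM _ <-]] := rmax_chain_lift maxF; exists M; rewrite ?s_max.
move=> j; rewrite size_map => /andP [j_gt0 js].
have [i ij step] := s_step j (introT andP (conj j_gt0 js)).
exists i => //; rewrite !(nth_map set0) //; last exact: ltn_trans ij js.
set Si := nth set0 s i in step *; set Sj := nth set0 s j in step *.
have card_diff : (#|Sj :\: Si| <= 1)%N by move: step; rewrite cardsD setIC; lia.
rewrite -{1}(setID Sj Si) setIC imsetU.
apply: leq_trans (leq_card_setU _ _) _; apply: leq_add.
  by apply: subset_leq_card; rewrite subsetI !imsetS ?subsetIl ?subsetIr.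
exact: leq_trans (leq_imset_card _ _) card_diff.
Qed.

Lemma exists_vertical_rmax_chain : exists2 V, rmax_chain le' V & vertical V.
Proof.
have [c cC] := set0Pn _ C_neq0.
have [x0 [eb0 l0]] := lower_copy cC; have [x1 [eb1 l1]] := upper_copy cC.
have cV : rchain le' (x0 |: [set x1]).
  apply: (rchainU1 le'_refl).
    by apply/rchainP => u v; rewrite !inE => /eqP -> /eqP ->; rewrite le'_refl.
  by move=> z; rewrite inE => /eqP ->; rewrite le'_base eb0 eb1 l0 l1 le_refl.
have [V maxV sub] := rchain_extend cV; exists V => //.
apply/verticalP; exists x0, x1; split; rewrite ?eb0 ?eb1 //.
  by apply: (subsetP sub); rewrite !inE eqxx.
by apply: (subsetP sub); rewrite !inE eqxx orbT.
Qed.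

Lemma rchain_lift_meet_C (D : {set T}) : rchain le D -> D :&: C != set0 ->
  exists2 M, rchain le' M & #|M| = #|D|.+1.
Proof.
move=> cD DC; have /rchainP cDP := cD.
have [c] := rchain_max le_refl le_trans DC (rchainS (subsetIl _ _) cD).
rewrite inE => /andP [cD' cC] cmax.
have [x1 [eb l1]] := upper_copy cC.
have x1_new : x1 \notin lift @: D.
  apply/imsetP => [[t _ ex1]]; move: l1; rewrite ex1 level_lift.
  by move: eb; rewrite ex1 base_lift => ->; rewrite mem_down_closure.
exists (x1 |: lift @: D); last by rewrite cardsU1 x1_new card_imset //; apply: lift_inj.
apply: (rchainU1 le'_refl (rchain_lift cD)) => z /imsetP [t tD ->].
rewrite !le'_base eb l1 base_lift level_lift.
case/orP: (cDP t c tD cD') => h; first by rewrite h leq_b1 orbT.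
case: (boolP (t \in I)) => tI; last by rewrite h.
by rewrite (cmax t) ?orbT // inE tD (convex_down_closure cC h tI).
Qed.

Lemma card_vertical_nonvertical (M N : {set T'}) :
  vertical M -> rmax_chain le' N -> ~~ vertical N -> (#|M :&: N| + 2 <= #|M|)%N.
Proof.
case/verticalP=> [x0 [x1 [x0M x1M eb l0 l1]]] maxN nvN.
have x1C := vertical_pair_C eb l0 l1.
apply: (leq_cardsI_add2 x0M x1M).
- by apply/eqP => e; move: l0; rewrite e l1.
- by apply: contra nvN => x0N; apply: rmax_chain_vertical maxN x0N _; rewrite eb.
- by apply: contra nvN => x1N; apply: rmax_chain_vertical maxN x1N x1C.
Qed.

Section Shelling.
Variable s : seq {set T'}.
Hypotheses (s_max : forall F, (F \in s) = rmax_chain le' F)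
  (s_step : forall j, (0 < j < size s)%N -> exists2 i, (i < j)%N &
     (#|nth set0 s j| <= #|nth set0 s i :&: nth set0 s j| + 1)%N).

Local Notation S j := (nth set0 s j).

Lemma rmax_chain_nth j : (j < size s)%N -> rmax_chain le' (S j).
Proof. by move=> js; rewrite -s_max mem_nth. Qed.

Lemma shelling_first_vertical j : (j < size s)%N -> vertical (S j) -> vertical (S 0).
Proof.
elim/ltn_ind: j => -[|j] IH js vj //.
have [i ij step] := s_step (j := j.+1) js; have is_ := ltn_trans ij js.
apply: (IH i ij is_); apply/contraT => nvi.
by have := card_vertical_nonvertical vj (rmax_chain_nth is_) nvi; rewrite setIC; lia.
Qed.

Lemma shelling_nonvertical_small l : vertical (S 0) ->
  (forall j, (j < size s)%N -> (#|S j| <= l)%N) ->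
  forall j, (j < size s)%N -> ~~ vertical (S j) -> (#|S j| < l)%N.
Proof.
move=> v0 bound; elim/ltn_ind => -[|j] IH js nvj; first by rewrite v0 in nvj.
have [i ij step] := s_step (j := j.+1) js; have is_ := ltn_trans ij js.
case: (boolP (vertical (S i))) => [vi | nvi].
  by have := card_vertical_nonvertical vi (rmax_chain_nth js) nvj; have := bound i is_; lia.
have lti := IH i ij is_ nvi; rewrite ltnNge; apply/negP => lj.
have sub : S i \subset S j.+1.
  by apply/setIidPl/eqP; rewrite eqEcard subsetIl /=; lia.
have e := rmax_chain_eq (rmax_chain_nth is_) (rmax_chain_chain (rmax_chain_nth js)) sub.
by move: lj; rewrite e leqNgt lti.
Qed.

End Shelling.

Lemma nonvertical_lift (D : {set T}) : rmax_chain le D -> D :&: C = set0 ->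
  exists2 N, rmax_chain le' N & ~~ vertical N /\ (#|D| <= #|N|)%N.
Proof.
move=> maxD DC; have [N [maxN sub baseN]] := rmax_chain_lift maxD.
exists N => //; split.
  apply/negP => /verticalP [x0 [x1 [_ x1N eb l0 l1]]].
  have : base x1 \in D :&: C by rewrite inE -baseN imset_f ?(vertical_pair_C eb l0 l1).
  by rewrite DC inE.
by rewrite -(card_imset _ lift_inj); apply: subset_leq_card.
Qed.

Lemma max_chain_card_doubling : weakly_shellable le' ->
  max_chain_card le' = (max_chain_card le).+1.
Proof.
case=> s [s_max s_step]; apply/eqP; rewrite eqn_leq max_chain_card_doubling_le /=.
have [D cD cardD] := max_chain_card_attained le.
case: (boolP (D :&: C == set0)) => [/eqP DC | DC]; last first.
  by rewrite -cardD; have [M cM <-] := rchain_lift_meet_C cD DC; apply: leq_max_chain_card.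
rewrite ltnNge; apply/negP => small.
have [N maxN [nvN cardN]] := nonvertical_lift (max_card_rmax_chain cD cardD) DC.
have [V maxV vV] := exists_vertical_rmax_chain.
have v0 : vertical (nth set0 s 0).
  by apply: (shelling_first_vertical s_max s_step (j := index V s));
    rewrite ?index_mem ?nth_index ?s_max.
have bound j : (j < size s)%N -> (#|nth set0 s j| <= max_chain_card le)%N.
  move=> js; apply: leq_trans small.
  exact/leq_max_chain_card/rmax_chain_chain/(rmax_chain_nth s_max).
have := shelling_nonvertical_small s_max s_step v0 bound (j := index N s).
by rewrite index_mem nth_index s_max // ltnNge -cardD cardN => /(_ maxN nvN).
Qed.

Lemma le'_interpolate x y w : le' y x -> le (base y) w -> le w (base x) ->
  exists w', [/\ base w' = w, le' y w' & le' w' x].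
Proof.
move=> lyx lyw lwx; move: (lyx); rewrite le'_base => /andP [_].
case ly: (level y); case lx: (level x) => //= _.
- have [w' [eb el]] : exists w', base w' = w /\ level w' = true.
    apply: doubling_preimage; have := base_level_mem y; rewrite ly => /orP [nI | yC].
      by rewrite (contra (down_closure_le lyw) nI).
    by case: (boolP (w \in I)) => // wI; rewrite (convex_down_closure yC lyw wI) orbT.
  by exists w'; rewrite !le'_base eb el ly lx lyw lwx.
- by exists (lift w); rewrite !le'_base base_lift level_lift ly lx lyw lwx leq_b1.
- have [w' [eb el]] := doubling_preimage (k := false) (down_closure_le lwx (level0_down lx)).
  by exists w'; rewrite !le'_base eb el ly lx lyw lwx.
Qed.

Lemma lower_covers_lift_inj t : {in lower_covers le' (lift t) &, injective base}.
Proof.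
have cover_level y1 y2 : y1 \in lower_covers le' (lift t) -> rlt le' y2 (lift t) ->
    base y1 = base y2 -> level y1 = false -> level y2 = false.
  rewrite inE => /andP [_ /forallP /(_ y2)] nbetween y2t eb l1.
  apply: contraNF nbetween => l2; rewrite y2t andbT /rlt le'_base eb le_refl l1 l2 /= andbT.
  by apply/eqP => e; move: l2; rewrite -e l1.
move=> y1 y2 y1c y2c eb; apply: base_level_inj => //.
have [y1t y2t] : rlt le' y1 (lift t) /\ rlt le' y2 (lift t).
  by move: y1c y2c; rewrite !inE => /andP [-> _] /andP [-> _].
case l1: (level y1); case l2: (level y2) => //.
  by rewrite (cover_level y2 y1) // in l1.
by rewrite (cover_level y1 y2) // in l2.
Qed.

Lemma base_lower_cover_lift t y :
  y \in lower_covers le' (lift t) -> base y \in lower_covers le t.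
Proof.
rewrite inE => /andP [/andP [nyx lyx] nbetween].
have [lyt lvy] : le (base y) t /\ (level y <= level (lift t))%N.
  by move: lyx; rewrite le'_base base_lift => /andP [].
rewrite inE /rlt lyt andbT; apply/andP; split.
  apply: contra nyx => /eqP eb; apply/eqP/base_level_inj; first by rewrite base_lift.
  move: lvy; rewrite level_lift; case ly: (level y) => //; case: (boolP (t \in I)) => //.
  by rewrite -eb (level0_down ly).
apply/forallP => w; apply/negP => /andP [/andP [nyw lyw] /andP [nwt lwt]].
have lwx : le w (base (lift t)) by rewrite base_lift.
have [w' [eb lyw' lw'x]] := le'_interpolate lyx lyw lwx.
move/forallP: nbetween => /(_ w'); rewrite /rlt lyw' lw'x !andbT.
apply/negP/negPn/andP; split; first by apply: contra nyw => /eqP ->; rewrite eb.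
by apply: contra nwt => /eqP ew; rewrite -eb ew base_lift.
Qed.

Lemma lower_cover_lift_base t u :
  u \in lower_covers le t -> exists2 y, y \in lower_covers le' (lift t) & base y = u.
Proof.
rewrite inE => /andP [/andP [nut lut] nbetween].
(* The level of the highest copy of [u] below [lift t]. *)
pose k := level (lift t) && ((u \notin I) || (u \in C)).
have [y [eb ly]] : exists y, base y = u /\ level y = k.
  apply: doubling_preimage; rewrite /k level_lift.
  case: (boolP (t \in I)) => [tI | _] /=; first exact: down_closure_le lut tI.
  by case: ifP => //; case: (boolP (u \in I)).
have lky : (k <= level (lift t))%N by rewrite /k; case: (level (lift t)); rewrite ?leq_b1.
exists y => //; rewrite inE /rlt le'_base eb base_lift lut ly lky /= !andbT.
apply/andP; split; first by apply: contra nut => /eqP e; rewrite -eb e base_lift.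
apply/forallP => z; apply/negP => /andP [/andP [nyz lyz] /andP [nzx lzx]].
move: (lyz) (lzx); rewrite !le'_base eb base_lift => /andP [luz lvyz] /andP [lzt lvzx].
have /orP [/eqP ez | /eqP ez] : (base z == u) || (base z == t).
  apply/contraT; rewrite negb_or => /andP [nzu nzt].
  by move/forallP: nbetween => /(_ (base z)); rewrite /rlt luz lzt eq_sym nzu nzt.
- have nlyz : level y != level z.
    by apply: contra nyz => /eqP el; apply/eqP/base_level_inj => //; rewrite eb ez.
  have [ly0 lz] : level y = false /\ level z = true.
    by move: lvyz nlyz; case: (level y); case: (level z).
  have : k.
    move: (base_level_mem z) lvzx; rewrite lz ez /k => ->.
    by case: (level (lift t)).
  by rewrite -ly ly0.
- have nlzx : level z != level (lift t).
    by apply: contra nzx => /eqP el; apply/eqP/base_level_inj => //; rewrite ez base_lift.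
  have [lz lx] : level z = false /\ level (lift t) = true.
    by move: lvzx nlzx; case: (level z); case: (level (lift t)).
  by move: lx; rewrite level_lift -ez (level0_down lz).
Qed.

Lemma card_lower_covers_lift t : #|lower_covers le' (lift t)| = #|lower_covers le t|.
Proof.
rewrite -(card_in_imset (@lower_covers_lift_inj t)); apply: eq_card => u.
apply/imsetP/idP => [[y yc ->] | uc]; first exact: base_lower_cover_lift.
by have [y yc <-] := lower_cover_lift_base uc; exists y.
Qed.

Lemma lower_copy_lower_cover x : level x -> base x \in C ->
  exists x0, [/\ base x0 = base x, level x0 = false & x0 \in lower_covers le' x].
Proof.
move=> lx xC; have [x0 [eb l0]] := lower_copy xC; exists x0; split => //.
have nx0 : x0 != x by apply/eqP => e; move: l0; rewrite e lx.
rewrite inE /rlt nx0 le'_base eb le_refl l0 /=; apply/forallP => z.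
apply/negP => /andP [/andP [nx0z l0z] /andP [nzx lzx]].
move: l0z lzx; rewrite !le'_base eb l0 => /andP [h1 _] /andP [h2 _].
have ez : base z = base x by apply: le_anti; rewrite h1 h2.
case lz: (level z).
  by case/eqP: nzx; apply: base_level_inj; rewrite ?lx.
by case/eqP: nx0z; apply: base_level_inj; rewrite ?eb ?l0.
Qed.

Section MinimumOfC.
Variable a : T.
Hypotheses (aC : a \in C) (a_min : forall c, c \in C -> le a c).

Lemma lower_covers_upper_min x : level x -> base x = a -> #|lower_covers le' x| = 1.
Proof.
move=> lx xa; have xC : base x \in C by rewrite xa.
have [x0 [eb0 l0 x0c]] := lower_copy_lower_cover lx xC.
apply/eqP/cards1P; exists x0; apply/setP => y; rewrite inE; apply/idP/eqP => [yc | ->] //.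
move: (yc); rewrite inE => /andP [/andP [nyx lyx] nbetween].
have [lyxb _] : le (base y) (base x) /\ (level y <= level x)%N by apply/andP; rewrite -le'_base.
have ly0 : level y = false.
  apply/negbTE/negP => ly; have yC := level1_C ly (down_closure_le lyxb (mem_down_closure xC)).
  case/eqP: nyx; apply: base_level_inj; last by rewrite ly lx.
  by apply: le_anti; rewrite lyxb xa a_min.
case: (eqVneq (base y) (base x)) => [eb | neb].
  by apply: base_level_inj; rewrite ?eb ?eb0 ?ly0 ?l0.
move/forallP: nbetween => /(_ x0); move: x0c; rewrite inE => /andP [-> _].
by rewrite /rlt le'_base eb0 lyxb ly0 l0 /= !andbT => /negPn/eqP.
Qed.

Lemma lower_covers_upper_nonmin x : level x -> base x \in C -> base x != a ->
  #|lower_covers le' x| != 1.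
Proof.
move=> lx xC nxa.
have [x0 [_ l0 x0c]] := lower_copy_lower_cover lx xC.
have lax : rlt le a (base x) by rewrite /rlt eq_sym nxa a_min.
have [u lau uc] := exists_lower_cover le_refl le_anti le_trans lax.
move: (uc); rewrite inE => /andP [/andP [nux lux] nbetween].
have uC : u \in C := convexP aC xC lau lux.
have [x2 [eb2 l2]] := upper_copy uC.
have x2c : x2 \in lower_covers le' x.
  rewrite inE /rlt le'_base eb2 l2 lx lux andbT /=; apply/andP; split.
    by apply: contra nux => /eqP <-; rewrite eb2.
  apply/forallP => z; apply/negP => /andP [/andP [n2z l2z] /andP [nzx lzx]].
  move: l2z lzx; rewrite !le'_base eb2 l2 lx => /andP [luz lz] /andP [lzx _].
  case: (eqVneq (base z) u) => [ezu | nzu].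
    by case/eqP: n2z; apply: base_level_inj; rewrite ?eb2 ?ezu ?l2; case: (level z) lz.
  case: (eqVneq (base z) (base x)) => [ezx | nzx'].
    by case/eqP: nzx; apply: base_level_inj; rewrite ?ezx ?lx; case: (level z) lz.
  by move/forallP: nbetween => /(_ (base z)); rewrite /rlt luz lzx eq_sym nzu nzx'.
apply/negP => /cards1P [y ey].
move: x0c x2c; rewrite ey !inE => /eqP e0 /eqP e2.
by move: l0; rewrite e0 -e2 l2.
Qed.

Lemma lift_or_upper_copy x : x = lift (base x) \/ level x /\ base x \in C.
Proof.
case: (boolP (level x == (base x \notin I))) => [/eqP el | nel].
  by left; apply: base_level_inj; rewrite ?base_lift ?level_lift.
have lx : level x by apply: contraNT nel => /negbTE lx; rewrite lx (level0_down lx).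
by right; split => //; apply: (level1_C lx); move: nel; rewrite lx; case: (base x \in I).
Qed.

Lemma card_unicovered_doubling : #|unicovered le'| = (#|unicovered le|).+1.
Proof.
have [xa [eba la]] := upper_copy aC.
have upper_notin_lift x : level x -> base x \in C -> x \notin lift @: unicovered le.
  move=> lx xC; apply/imsetP => -[t _ ext]; move: lx.
  by rewrite ext level_lift -{1}(base_lift t) -ext mem_down_closure.
have -> : unicovered le' = xa |: lift @: unicovered le.
  apply/setP => x; rewrite !inE; case: (lift_or_upper_copy x) => [ex | [lx xC]].
    have nxa : x != xa.
      apply/eqP => e; move: la eba; rewrite -e ex level_lift base_lift => nI eb.
      by move: nI; rewrite eb mem_down_closure.
    rewrite (negbTE nxa) ex card_lower_covers_lift mem_imset /= ?inE //; exact: lift_inj.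
  rewrite (negbTE (upper_notin_lift x lx xC)) orbF.
  case: (eqVneq (base x) a) => [exa | nxa].
    rewrite lower_covers_upper_min // eqxx; apply/esym/eqP.
    by apply: base_level_inj; rewrite ?exa ?eba ?lx ?la.
  rewrite (negbTE (lower_covers_upper_nonmin lx xC nxa)); apply/esym/negbTE.
  by apply: contra nxa => /eqP ->; rewrite eba.
rewrite cardsU1 (upper_notin_lift _ la) ?eba // card_imset //; exact: lift_inj.
Qed.

Lemma max_chain_card_unicovered_doubling :
  (weakly_shellable le -> max_chain_card le = (#|unicovered le|).+1) ->
  weakly_shellable le' -> max_chain_card le' = (#|unicovered le'|).+1.
Proof.
move=> IH ws'; rewrite max_chain_card_doubling // card_unicovered_doubling IH //.
exact: weakly_shellable_base.
Qed.

End MinimumOfC.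

End Doubling.

Lemma doubling_generated_porder (lower : bool) (T : finType) (le : rel T) :
  doubling_generated lower le -> [/\ reflexive le, antisymmetric le & transitive le].
Proof.
elim=> {T le} [T le T1 le_refl | T le C T' le' f _ [le_refl le_anti le_trans] _ _ f_inj _ _ le'E].
  have all_eq (x y : T) : x = y by apply: (card_le1_eqP (A := T)); rewrite ?T1 ?inE.
  by split=> // y x z _ _; rewrite (all_eq z x).
split; [exact: le'_refl le'E | exact: le'_anti f_inj le'E | exact: le'_trans le'E].
Qed.

Lemma max_chain_card_singleton (T : finType) (le : rel T) :
  #|T| = 1 -> reflexive le -> max_chain_card le = (#|unicovered le|).+1.
Proof.
move=> T1 le_refl; have all_eq (x y : T) : x = y.
  by apply: (card_le1_eqP (A := T)); rewrite ?T1 ?inE.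
have -> : unicovered le = set0.
  apply/setP => x; rewrite !inE; suff -> : lower_covers le x = set0 by rewrite cards0.
  by apply/setP => y; rewrite !inE /rlt (all_eq y x) eqxx.
apply/eqP; rewrite cards0 eqn_leq; apply/andP; split.
  by apply/bigmax_leqP => S _; rewrite -T1 max_card.
have [x _] : exists x, x \in T by apply/card_gt0P; rewrite T1.
have := @leq_max_chain_card T le [set x]; rewrite cards1; apply.
by apply/rchainP => u v; rewrite !inE => /eqP -> /eqP ->; rewrite le_refl.
Qed.

Lemma lower_pseudo_interval_min (T : finType) (le : rel T) (C : {set T}) :
  reflexive le -> lower_pseudo_interval le C ->
  exists2 a, a \in C & forall c, c \in C -> le a c.
Proof.
move=> le_refl [a [B [/set0Pn [b bB] leaB -> _]]]; exists a.
  by apply/bigcupP; exists b; rewrite // inE le_refl leaB.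
by move=> c /bigcupP [b' _]; rewrite inE => /andP [].
Qed.

Lemma max_chain_card_unicovered (T : finType) (le : rel T) :
  doubling_generated true le -> weakly_shellable le ->
  max_chain_card le = (#|unicovered le|).+1.
Proof.
elim=> {T le} [T le T1 le_refl _ | T le C T' le' f dg IH C_neq0 lpi f_inj f_mem f_onto le'E].
  exact: max_chain_card_singleton.
have [le_refl le_anti le_trans] := doubling_generated_porder dg.
have C_convex : convex le C by case: lpi => [a [B [_ _ _ ?]]].
have [a aC a_min] := lower_pseudo_interval_min le_refl lpi.
exact: (max_chain_card_unicovered_doubling le_refl le_anti le_trans C_neq0 C_convex
  f_inj f_mem f_onto le'E aC a_min IH).
Qed.

Section DualDoubling.
Variables (T : finType) (le : rel T) (C : {set T}).
Hypotheses (le_refl : reflexive le) (le_trans : transitive le) (C_convex : convex le C).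

Local Notation ge := (fun x y => le y x).
Local Notation I := (down_closure le C).
Local Notation U := (down_closure ge C).

(* Identifies the dual of the doubling of [C] with the doubling of [C] in the
   dual order: the two copies of an element of [C] are swapped, an element
   outside [C] keeps its only copy. *)
Definition dual_copy (q : T * bool) : T * bool :=
  (q.1, if q.1 \in C then ~~ q.2 else q.1 \notin U).

Lemma doubling_notin_C (le0 : rel T) y k :
  (y, k) \in doubling le0 C -> y \notin C -> k = (y \notin down_closure le0 C).
Proof. by rewrite inE; case: k => /=; case: (y \in C); case: (y \in down_closure _ _). Qed.

Lemma dual_copy_mem q : dual_copy q \in doubling ge C.
Proof.
rewrite inE /dual_copy /=; case: (boolP (q.1 \in C)) => qC.
  by case: q.2; rewrite /= ?qC ?orbT ?mem_down_closure.
by case: (boolP (q.1 \in U)).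
Qed.

Lemma dual_copy_inj q1 q2 : q1 \in doubling le C -> q2 \in doubling le C ->
  dual_copy q1 = dual_copy q2 -> q1 = q2.
Proof.
case: q1 q2 => y k1 [y2 k2] D1 D2 [e]; rewrite -{}e in D2 *.
case: (boolP (y \in C)) => yC; first by move/(congr1 negb); rewrite !negbK => ->.
by move=> _; rewrite (doubling_notin_C D1 yC) (doubling_notin_C D2 yC).
Qed.

Lemma dual_copy_onto q : q \in doubling ge C ->
  exists2 q', q' \in doubling le C & dual_copy q' = q.
Proof.
case: q => y k D; case: (boolP (y \in C)) => yC.
  exists (y, ~~ k); last by rewrite /dual_copy /= yC negbK.
  by rewrite inE /=; case: (k); rewrite ?yC ?orbT ?mem_down_closure.
exists (y, y \notin I); first by rewrite inE /=; case: (boolP (y \in I)).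
by rewrite /dual_copy /= (negbTE yC) (doubling_notin_C D yC).
Qed.

Lemma dual_copy_le q1 q2 : q1 \in doubling le C -> q2 \in doubling le C ->
  dbl_le le q2 q1 = dbl_le ge (dual_copy q1) (dual_copy q2).
Proof.
case: q1 q2 => y1 k1 [y2 k2] D1 D2; rewrite /dbl_le /dual_copy /=.
case: (boolP (le y2 y1)) => //= l21.
case: (boolP (y1 \in C)) => c1; case: (boolP (y2 \in C)) => c2.
- by case: (k1); case: (k2).
- have k2f : k2 = false.
    rewrite (doubling_notin_C D2 c2); apply/negbTE; rewrite negbK inE.
    by apply/existsP; exists y1; rewrite c1.
  have nU : y2 \notin U.
    apply/negP; rewrite inE => /existsP [c /andP [cC lc]].
    by rewrite (convexP C_convex cC c1 lc l21) in c2.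
  by rewrite k2f nU; case: (k1).
- have k1t : k1 = true.
    rewrite (doubling_notin_C D1 c1); apply/negP; rewrite inE => /existsP [c /andP [cC lc]].
    by rewrite (convexP C_convex c2 cC l21 lc) in c1.
  have yU : y1 \in U by rewrite inE; apply/existsP; exists y2; rewrite c2.
  by rewrite k1t yU /= leq_b1.
- rewrite (doubling_notin_C D1 c1) (doubling_notin_C D2 c2) !leq_bool.
  have h1 : (y1 \in I) -> (y2 \in I).
    rewrite !inE => /existsP [c /andP [cC lc]].
    by apply/existsP; exists c; rewrite cC (le_trans l21 lc).
  have h2 : (y2 \in U) -> (y1 \in U).
    rewrite !inE => /existsP [c /andP [cC lc]].
    by apply/existsP; exists c; rewrite cC (le_trans lc l21).
  by apply/idP/idP => _; apply/implyP; [apply: contra h2 | apply: contra h1].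
Qed.

Lemma lower_pseudo_interval_dual : upper_pseudo_interval le C -> lower_pseudo_interval ge C.
Proof.
move=> [b [A [A_neq0 leAb EC _]]]; exists b, A; split => //.
  by rewrite EC; apply: eq_bigr => a _; apply/setP => y; rewrite !inE andbC.
apply/forallP => x; apply/implyP => xC; apply/forallP => z; apply/implyP => zC.
by apply/forallP => y; apply/implyP => /andP [lyx lzy]; apply: (convexP C_convex) zC xC lzy lyx.
Qed.

End DualDoubling.

Lemma doubling_generated_dual (T : finType) (le : rel T) :
  doubling_generated false le -> doubling_generated true (fun x y => le y x).
Proof.
elim=> {T le} [T le T1 le_refl | T le C T' le' f dg IH C_neq0 upi f_inj f_mem f_onto le'E].
  exact: dg_one.
have [le_refl _ le_trans] := doubling_generated_porder dg.
have C_convex : convex le C by case: upi => [b [A [_ _ _ ?]]].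
apply: (@dg_double true T (fun x y => le y x) C T' (fun x y => le' y x)
  (fun x => dual_copy le C (f x))) => //.
- exact: lower_pseudo_interval_dual.
- by move=> x y /(dual_copy_inj (f_mem x) (f_mem y)) /f_inj.
- by move=> x; apply: dual_copy_mem.
- move=> q /(dual_copy_onto le_refl) [q' q'D <-].
  by have [x fx] := f_onto _ q'D; exists x; rewrite fx.
- by move=> x y; rewrite le'E; apply: dual_copy_le.
Qed.

Import Order.Theory.
Local Open Scope order_scope.

Section Lattice.
Variables (d : Order.disp_t) (L : finTBLatticeType d).
Local Notation leL := (fun x y : L => x <= y).

Let leL_refl : reflexive leL. Proof. exact: lexx. Qed.
Let leL_anti : antisymmetric leL. Proof. exact: le_anti. Qed.
Let leL_trans : transitive leL. Proof. exact: le_trans. Qed.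

Lemma unicovered_join_irreducible (x : L) :
  x \in unicovered leL -> join_irreducible x.
Proof.
rewrite inE => /cards1P [y ey].
have : y \in lower_covers leL x by rewrite ey inE.
rewrite inE => /andP [/andP [nyx lyx] _].
have below w : w != x -> w <= x -> w <= y.
  move=> nwx lwx; have [w' lww' w'c] := exists_lower_cover leL_refl leL_anti leL_trans
    (introT andP (conj nwx lwx) : rlt leL w x).
  by move: w'c; rewrite ey inE => /eqP <-.
apply/andP; split.
  by apply: contra nyx => /eqP x0; rewrite x0 -lex0 -x0.
apply/forallP => u; apply/forallP => v; apply/implyP => /eqP xuv.
apply/contraT; rewrite negb_or => /andP [nxu nxv].
have : x <= y by rewrite xuv leUx !below 1?eq_sym // xuv ?leUl ?leUr.
by move=> lxy; case/eqP: nyx; apply: le_anti; rewrite lxy lyx.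
Qed.

Lemma join_irreducible_unicovered (x : L) :
  join_irreducible x -> x \in unicovered leL.
Proof.
case/andP => x_neq0 /forallP x_irr; rewrite inE.
have bx : rlt leL \bot x by rewrite /rlt eq_sym x_neq0 le0x.
have [y _ yc] := exists_lower_cover leL_refl leL_anti leL_trans bx.
apply/cards1P; exists y; apply/setP => z; rewrite inE; apply/idP/eqP => [zc | ->] //.
apply/eqP/contraT => nzy.
move: yc zc; rewrite !inE => /andP [/andP [nyx lyx] ycov] /andP [/andP [nzx lzx] zcov].
have [e | ne] := eqVneq (y `|` z) x.
  move: (x_irr y) => /forallP /(_ z); rewrite e eqxx /=.
  by case/orP => /eqP exy; [move: nyx | move: nzx]; rewrite exy eqxx.
have eyz : y `|` z = y.
  apply/eqP/contraT => n; move/forallP: ycov => /(_ (y `|` z)).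
  by rewrite /rlt ne leUx lyx lzx leUl eq_sym n.
move/forallP: zcov => /(_ y).
by rewrite /rlt -eyz leUr eyz nzy nyx lyx.
Qed.

Lemma unicovered_lattice : unicovered leL = [set x | join_irreducible x].
Proof.
apply/setP => x; rewrite [RHS]inE.
by apply/idP/idP; [apply: unicovered_join_irreducible | apply: join_irreducible_unicovered].
Qed.

Lemma weakly_shellable_of_shellable : shellable L -> weakly_shellable leL.
Proof.
move=> [s [_ s_max s_pure]]; exists s; split => // j /andP [j_gt0 js].
have pure := s_pure j (introT andP (conj j_gt0 js)).
set K := shelling_complex s j in pure.
have set0K : set0 \in K.
  rewrite inE sub0set /=; apply/hasP; exists (nth set0 (take j s) 0); rewrite ?sub0set //.
  by apply: mem_nth; rewrite size_take js.
have [G GK Gmax] := @arg_maxnP _ set0 (fun G => G \in K) (fun G : {set L} => #|G|) set0K.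
have cardG : #|G| = (#|nth set0 s j| - 1)%N.
  apply: pure => // H HK sub; apply/eqP; rewrite eq_sym eqEcard sub /=; exact: Gmax.
move: GK; rewrite inE => /andP [Gj /hasP [F Fj GF]].
exists (index F s); first exact: index_ltn Fj.
rewrite nth_index; last exact: mem_take Fj.
apply: leq_trans (_ : #|G| + 1 <= _)%N; first by rewrite cardG; lia.
by rewrite leq_add2r; apply: subset_leq_card; rewrite subsetI GF Gj.
Qed.

Lemma lattice_lengthE : lattice_length L = (max_chain_card leL).-1.
Proof. by rewrite -subn1. Qed.

End Lattice.

Theorem corollary3p25 (d : Order.disp_t) (L : finTBLatticeType d) :
  (join_congruence_uniform L -> shellable L -> join_extremal L) /\
  (meet_congruence_uniform L -> shellable L -> meet_extremal L).
Proof.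
split => [jcu sh | mcu sh].
- rewrite /join_extremal lattice_lengthE.
  by rewrite (max_chain_card_unicovered jcu (weakly_shellable_of_shellable sh)) unicovered_lattice.
- have := max_chain_card_unicovered (doubling_generated_dual mcu)
    (weakly_shellable_op (weakly_shellable_of_shellable sh)).
  rewrite max_chain_card_op /meet_extremal lattice_lengthE => ->.
  by rewrite (unicovered_lattice L^d).
Qed.
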